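(* Assume the Objectivity Assumption (for every paper $a$, all reviewers give $a$ the same score vector). Let $p,q \in (1,\infty)$. Then the $L(p,q)$-aggregation method satisfies Consensus. If moreover $p=q$ (so $p=q>1$), the $L(p,q)$-aggregation method satisfies Consistency.
   Context: Peer-review setting: a finite set $\mathcal{R}$ of $n$ reviewers, a finite set $\mathcal{P}$ of $m$ papers, and $d\ge 1$ evaluation criteria. Every reviewer $i$ reviews every paper $a$, giving a score vector $\bar{x}_{ia}\in[0,10]^d$ and a recommendation $y_{ia}\in[0,10]$. A function $h:[0,10]^d\to[0,10]$ is monotonic if $\bar x\le \bar y$ componentwise implies $h(\bar x)\le h(\bar y)$. Each reviewer $i$ has a monotonic $h_i$ with $y_{ia}=h_i(\bar x_{ia})$ for all $a$. The $L(p,q)$-aggregation method ($p,q\in[1,\infty)$): (1) ERM step: find a monotonic $\hat h:[0,10]^d\to[0,10]$ minimizing $\big[\sum_{i\in\mathcal{R}}\big(\sum_{a\in\mathcal{P}}|y_{ia}-h(\bar x_{ia})|^p\big)^{q/p}\big]^{1/q}$ over all monotonic $h$ (only the finitely many values $h(\bar x_{ia})$ matter); among minimizers, the one whose value vector $(\hat h(\bar x_{ia}))_{i,a}$ has smallest Euclidean norm is chosen. Put $\hat y_{ia}=\hat h(\bar x_{ia})$. (2) Aggregation step: the solution $(s_a)_{a\in\mathcal{P}}$ minimizes $\big[\sum_{i\in\mathcal{R}}\big(\sum_{a\in\mathcal{P}}|\hat y_{ia}-s_a|^p\big)^{q/p}\big]^{1/q}$ (ties broken by smallest Euclidean norm).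 Objectivity Assumption: $\bar x_{ia}=\bar x_{ja}$ for all $i,j\in\mathcal R$ and all $a\in\mathcal P$. Axioms (a method satisfies an axiom if the stated property holds for every admissible data set): Consensus: if for a paper $a$ we have $y_{ia}=y$ for all $i\in\mathcal R$, then $s_a=y$. Paper $a$ dominates paper $b$ if there is a permutation $\pi$ of $\mathcal R$ with $y_{ia}\ge y_{\pi(i)b}$ for all $i$; the domination is strict if at least one of these inequalities is strict. Efficiency: whenever $a$ dominates $b$, $s_a\ge s_b$. Consistency: Efficiency holds and, whenever $a$ strictly dominates $b$, $s_a>s_b$. *)

From HB Require Import structures.
From mathcomp Require Import all_boot all_order all_algebra all_fingroup.
From mathcomp Require Import all_classical all_reals.
From mathcomp Require Import exp.

Set Implicit Arguments.
Unset Strict Implicit.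
Unset Printing Implicit Defensive.

Import Order.TTheory GRing.Theory Num.Theory.
Local Open Scope ring_scope.

Section PeerReview.
Variables (R : realType) (n m d : nat).

(* Reviewers are 'I_n, papers are 'I_m, criteria are 'I_d. *)

Definition in_box (x : 'I_d -> R) : Prop := forall k, 0 <= x k <= 10.

(* h : [0,10]^d -> [0,10] monotonic (only its values on [0,10]^d matter). *)
Definition monotonic (h : ('I_d -> R) -> R) : Prop :=
  (forall x, in_box x -> 0 <= h x <= 10) /\
  (forall x y, in_box x -> in_box y -> (forall k, x k <= y k) -> h x <= h y).

Definition admissible (x : 'I_n -> 'I_m -> 'I_d -> R) (y : 'I_n -> 'I_m -> R) : Prop :=
  (forall i a, in_box (x i a)) /\
  exists h : 'I_n -> ('I_d -> R) -> R,
    (forall i, monotonic (h i)) /\ (forall i a, y i a = h i (x i a)).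

Definition objectivity (x : 'I_n -> 'I_m -> 'I_d -> R) : Prop :=
  forall i j a, x i a = x j a.

Definition Lpq (p q : R) (t v : 'I_n -> 'I_m -> R) : R :=
  powR (\sum_(i < n) powR (\sum_(a < m) powR `|t i a - v i a| p) (q / p)) (1 / q).

Definition norm2 (v : 'I_n -> 'I_m -> R) : R :=
  Num.sqrt (\sum_(i < n) \sum_(a < m) v i a ^+ 2).
Definition normvec (s : 'I_m -> R) : R :=
  Num.sqrt (\sum_(a < m) s a ^+ 2).

Definition values (x : 'I_n -> 'I_m -> 'I_d -> R) (h : ('I_d -> R) -> R) :
  'I_n -> 'I_m -> R := fun i a => h (x i a).

Definition ERM_output (p q : R) (x : 'I_n -> 'I_m -> 'I_d -> R)
    (y : 'I_n -> 'I_m -> R) (yhat : 'I_n -> 'I_m -> R) : Prop :=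
  (exists hh, monotonic hh /\ yhat = values x hh) /\
  (forall h, monotonic h -> Lpq p q y yhat <= Lpq p q y (values x h)) /\
  (forall h, monotonic h -> Lpq p q y (values x h) = Lpq p q y yhat ->
     norm2 yhat <= norm2 (values x h)).

Definition bcast (s : 'I_m -> R) : 'I_n -> 'I_m -> R := fun _ a => s a.

Definition Agg_output (p q : R) (yhat : 'I_n -> 'I_m -> R) (s : 'I_m -> R) : Prop :=
  (forall s', Lpq p q yhat (bcast s) <= Lpq p q yhat (bcast s')) /\
  (forall s', Lpq p q yhat (bcast s') = Lpq p q yhat (bcast s) ->
     normvec s <= normvec s').

Definition consensus (y : 'I_n -> 'I_m -> R) (s : 'I_m -> R) : Prop :=
  forall a (y0 : R), (forall i, y i a = y0) -> s a = y0.

Definition dominates (y : 'I_n -> 'I_m -> R) (a b : 'I_m) : Prop :=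
  exists pi : {perm 'I_n}, forall i, y (pi i) b <= y i a.

Definition strictly_dominates (y : 'I_n -> 'I_m -> R) (a b : 'I_m) : Prop :=
  exists pi : {perm 'I_n},
    (forall i, y (pi i) b <= y i a) /\ (exists i, y (pi i) b < y i a).

Definition efficiency (y : 'I_n -> 'I_m -> R) (s : 'I_m -> R) : Prop :=
  forall a b, dominates y a b -> s b <= s a.

Definition consistency (y : 'I_n -> 'I_m -> R) (s : 'I_m -> R) : Prop :=
  efficiency y s /\ (forall a b, strictly_dominates y a b -> s b < s a).

End PeerReview.

From HB Require Import structures.
From mathcomp Require Import all_boot all_order all_algebra all_fingroup.
From mathcomp Require Import all_classical all_reals.
From mathcomp Require Import exp topology normedtype.
From mathcomp Require Import ring lra.
Import Order.TTheory GRing.Theory Num.Theory.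
Import numFieldNormedType.Exports.
Local Open Scope ring_scope.
Set Implicit Arguments.
Unset Strict Implicit.
Unset Printing Implicit Defensive.

(* Under objectivity a monotonic h gives each paper a single value h(x_a), so the ERM
   step yields one value g_a per paper and the aggregation step returns s = g.

   Consensus: clamping the ERM function between the pointwise minimum and maximum of
   the reviewers' functions h_i keeps it monotonic and moves every value weakly closer
   to every recommendation, strictly closer where it leaves that range. Hence g_a lies
   between min_i y_ia and max_i y_ia, which coincide under consensus.

   Consistency (p = q): the p-th power of the loss separates into the sum over papers
   of sum_i |y_ia - g_a|^p. Each term is strictly convex in g_a, and its unique minimiser
   is the root of the strictly decreasing function sum_i sgn(y_ia - t) |y_ia - t|^(p-1).
   This root is monotonic in the recommendations, so the function that sends x to this
   root is itself admissible, and therefore g is exactly this root. If a dominates b,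
   then after permuting reviewers the recommendations of a are pointwise above those
   of b, which pushes the root up, weakly in general and strictly under strict
   domination. *)

Lemma inc_can_continuous (R : realType) (f g : R -> R) :
  {homo f : u w / u < w} -> cancel g f -> continuous f.
Proof.
move=> /le_mono/leW_mono f_lt gK x; apply/cvgrPdist_lt => e e_gt0.
have lo_x : g (f x - e) < x by rewrite -f_lt gK gtrBl.
have x_hi : x < g (f x + e) by rewrite -f_lt gK ltrDl.
near=> u.
rewrite ltr_distlC -[f x - e]gK -[f x + e]gK !f_lt.
by apply/andP; split; near: u; [exact: lt_nbhsr | exact: lt_nbhsl].
Unshelve. all: by end_near. Qed.

Section SignedPower.
Variable R : realType.
Implicit Types a u w : R.

Definition spow a u := Num.sg u * `|u| `^ a.

Lemma spowN a u : spow a (- u) = - spow a u.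
Proof. by rewrite /spow sgrN normrN mulNr. Qed.

Lemma ger0_spow a u : 0 < a -> 0 <= u -> spow a u = u `^ a.
Proof.
move=> a_gt0; rewrite le_eqVlt => /predU1P[<-|u_gt0].
  by rewrite /spow sgr0 mul0r powR0 ?gt_eqF.
by rewrite /spow gtr0_sg // mul1r gtr0_norm.
Qed.

Lemma spow_lt a : 0 < a -> {homo spow a : u w / u < w}.
Proof.
move=> a_gt0 u w uw.
have nneg_lt u' w' : 0 <= u' -> u' < w' -> spow a u' < spow a w'.
  move=> u0 uw'; have w0 := le_trans u0 (ltW uw').
  by rewrite !ger0_spow // gt0_ltr_powR.
have [u0|u_lt0] := leP 0 u; first exact: nneg_lt.
have [w_le0|w_gt0] := leP w 0.
  by rewrite -ltrN2 -!spowN nneg_lt ?oppr_ge0 ?ltrN2.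
have spow_u_lt0 : spow a u < 0.
  by rewrite -oppr_gt0 -spowN ger0_spow ?oppr_ge0 ?ltW // powR_gt0 // oppr_gt0.
by rewrite (lt_trans spow_u_lt0) // ger0_spow ?powR_gt0 // ltW.
Qed.

Lemma spowK a : 0 < a -> cancel (spow a^-1) (spow a).
Proof.
move=> a_gt0.
have nnegK v : 0 <= v -> spow a (spow a^-1 v) = v.
  move=> v0; rewrite !ger0_spow ?invr_gt0 ?powR_ge0 //.
  by rewrite -powRrM mulVf ?gt_eqF // powRr1.
move=> v; have [/nnegK //|v_lt0] := leP 0 v.
by apply: oppr_inj; rewrite -!spowN nnegK // oppr_ge0 ltW.
Qed.

Lemma continuous_spow a : 0 < a -> continuous (spow a).
Proof. by move=> a_gt0; apply: inc_can_continuous (spow_lt a_gt0) (spowK a_gt0). Qed.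

Lemma norm_powR_tangent p u w : 1 < p ->
  `|u| `^ p + p * spow (p - 1) u * (w - u) <= `|w| `^ p.
Proof.
move=> p_gt1; have p_gt0 : 0 < p := lt_trans ltr01 p_gt1.
have p1_gt0 : 0 < p - 1 by rewrite subr_gt0.
wlog u_ge0 : u w / 0 <= u.
  move=> tangent; have [/tangent //|u_lt0] := leP 0 u.
  have := tangent (- u) (- w); rewrite !normrN spowN oppr_ge0 => /(_ (ltW u_lt0)).
  by congr (_ + _ <= _); ring.
rewrite ger0_spow // (ger0_norm u_ge0).
set B := u `^ (p - 1).
have B_ge0 : 0 <= B := powR_ge0 _ _.
have uB : u * B = u `^ p by rewrite mulr_powRB1.
set q := p / (p - 1).
have q_gt0 : 0 < q by rewrite divr_gt0.
have pq : p^-1 + q^-1 = 1 by rewrite invf_div; field; rewrite gt_eqF.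
have Bq : B `^ q = u `^ p by rewrite -powRrM mulrC divfK ?gt_eqF.
have young := conjugate_powR (normr_ge0 w) B_ge0 p_gt0 q_gt0 pq.
rewrite Bq in young.
have young_p : p * (`|w| * B) <= `|w| `^ p + (p - 1) * u `^ p.
  have -> : `|w| `^ p + (p - 1) * u `^ p = p * (`|w| `^ p / p + u `^ p / q).
    by rewrite /q; field; rewrite !gt_eqF.
  by rewrite ler_pM2l.
have wB : p * (w * B) <= p * (`|w| * B) by rewrite ler_pM2l // ler_wpM2r // ler_norm.
have -> : u `^ p + p * B * (w - u) = p * (w * B) - (p - 1) * u `^ p.
  by rewrite -uB; ring.
lra.
Qed.

End SignedPower.

Section PCenter.
Variables (R : realType) (p : R).
Hypothesis p_gt1 : 1 < p.
Variables (I : finType) (i0 : I).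
Implicit Types (v : I -> R) (t : R).

Let p_gt0 : 0 < p. Proof. exact: lt_trans ltr01 p_gt1. Qed.
Let p1_gt0 : 0 < p - 1. Proof. by rewrite subr_gt0. Qed.

Definition ploss v t := \sum_i `|v i - t| `^ p.

(* [-1/p] times the derivative of [ploss v] at [t]. *)
Definition pbalance v t := \sum_i spow (p - 1) (v i - t).

Lemma pbalance_decr v : {homo pbalance v : t t' /~ t < t'}.
Proof.
move=> t t' tt'; rewrite /pbalance; apply: ltr_sum => [|i _].
  by apply/hasP; exists i0; rewrite ?mem_index_enum.
by apply: spow_lt; rewrite // ltrD2l ltrN2.
Qed.

Lemma ler_pbalance v v' t : (forall i, v i <= v' i) -> pbalance v t <= pbalance v' t.
Proof.
move=> vv'; apply: ler_sum => i _.
by apply: (ltW_homo (spow_lt p1_gt0)); rewrite lerD2r.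
Qed.

Lemma ltr_pbalance v v' t k : (forall i, v i <= v' i) -> v k < v' k ->
  pbalance v t < pbalance v' t.
Proof.
move=> vv' vk; rewrite /pbalance (bigD1 k) // [ltRHS](bigD1 k) //=.
rewrite ltr_leD ?(spow_lt p1_gt0) ?ltrD2r //.
by apply: ler_sum => i _; apply: (ltW_homo (spow_lt p1_gt0)); rewrite lerD2r.
Qed.

Lemma pbalance_perm (s : {perm I}) v t : pbalance (v \o s) t = pbalance v t.
Proof. by rewrite /pbalance [RHS](reindex_inj (@perm_inj _ s)). Qed.

Lemma continuous_pbalance v : continuous (pbalance v).
Proof.
apply: continuous_big => [|i _ t]; first exact: add_continuous.
apply: (@continuous_comp _ _ _ (fun t => v i - t) (spow (p - 1))).
  by apply: continuousB; [exact: cst_continuous | exact: cvg_id].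
exact: continuous_spow.
Qed.

Let spow_ge0 u : 0 <= u -> 0 <= spow (p - 1) u.
Proof. by move=> u_ge0; rewrite ger0_spow ?powR_ge0. Qed.

Lemma exists_pbalance_root v lo hi : (forall i, lo <= v i <= hi) ->
  exists2 c, lo <= c <= hi & pbalance v c = 0.
Proof.
move=> v_in; have /andP[lo_v v_hi] := v_in i0.
have lo_hi := le_trans lo_v v_hi.
have lo_ge0 : 0 <= pbalance v lo.
  by apply: sumr_ge0 => i _; rewrite spow_ge0 // subr_ge0; case/andP: (v_in i).
have hi_le0 : pbalance v hi <= 0.
  apply: sumr_le0 => i _; rewrite -[v i - hi]opprB spowN oppr_le0 spow_ge0 // subr_ge0.
  by case/andP: (v_in i).
have [|c c_in c_root] := IVT lo_hi (continuous_subspaceT (@continuous_pbalance v)) (v := 0).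
  by rewrite ge_min le_max hi_le0 lo_ge0 orbT.
by exists c; rewrite // -in_itv.
Qed.

Lemma ploss_tangent v t w : ploss v t + p * pbalance v t * (t - w) <= ploss v w.
Proof.
rewrite mulr_sumr mulr_suml -big_split; apply: ler_sum => i _ /=.
have := norm_powR_tangent (v i - t) (v i - w) p_gt1.
by congr (_ + _ <= _); ring.
Qed.

Lemma ploss_min v c w : pbalance v c = 0 -> ploss v c <= ploss v w.
Proof. by move=> c_root; have := ploss_tangent v c w; rewrite c_root mulr0 mul0r addr0. Qed.

Lemma ploss_min_unique v c w : pbalance v c = 0 -> ploss v w <= ploss v c -> w = c.
Proof.
move=> c_root w_min; set mid := (c + w) / 2.
(* The tangent at [mid] already climbs from [mid] towards [w]. *)
have tangent := ploss_tangent v mid w; have mid_ge := ploss_min mid c_root.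
have : p * pbalance v mid * (mid - w) <= 0 by lra.
rewrite -mulrA pmulr_rle0 // => slope_le0.
have [wc|cw|//] := ltgtP w c.
- have : 0 < pbalance v mid by rewrite -c_root; apply: pbalance_decr; rewrite /mid; lra.
  by rewrite /mid in slope_le0 *; nra.
- have : pbalance v mid < 0 by rewrite -c_root; apply: pbalance_decr; rewrite /mid; lra.
  by rewrite /mid in slope_le0 *; nra.
Qed.

End PCenter.

Lemma ler_sum_eq (R : numDomainType) (I : finType) (F G : I -> R) :
  (forall i, F i <= G i) -> \sum_i G i <= \sum_i F i -> forall i, F i = G i.
Proof.
move=> FG GF i; have /eq_leif := leif_sum (fun j (_ : true) => leif_eq (FG j)).
by rewrite eq_le GF ler_sum // => /esym/forallP/(_ i)/implyP/(_ isT)/eqP.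
Qed.

Section PowerSums.
Variables (R : realType) (I : finType).
Implicit Types (r : R) (f g : I -> R).

Lemma sum_powR_ge0 r f : 0 <= \sum_i f i `^ r.
Proof. by apply: sumr_ge0 => i _; exact: powR_ge0. Qed.

Let ler_powR_nneg r x y : 0 <= r -> 0 <= x <= y -> x `^ r <= y `^ r.
Proof.
by move=> r_ge0 /andP[x_ge0 xy]; rewrite ge0_ler_powR // nnegrE (le_trans x_ge0 xy).
Qed.

Lemma ler_sum_powR r f g : 0 <= r -> (forall i, 0 <= f i <= g i) ->
  \sum_i f i `^ r <= \sum_i g i `^ r.
Proof. by move=> r_ge0 fg; apply: ler_sum => i _; exact: ler_powR_nneg (fg i). Qed.

Lemma ltr_sum_powR r f g k : 0 < r -> (forall i, 0 <= f i <= g i) -> f k < g k ->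
  \sum_i f i `^ r < \sum_i g i `^ r.
Proof.
move=> r_gt0 fg fg_k; rewrite (bigD1 k) // [ltRHS](bigD1 k) //=.
have /andP[f_ge0 _] := fg k.
rewrite ltr_leD ?gt0_ltr_powR ?nnegrE ?(le_trans f_ge0 (ltW fg_k)) //.
by apply: ler_sum => i _; exact: ler_powR_nneg (ltW r_gt0) (fg i).
Qed.

End PowerSums.

Section Loss.
Variables (R : realType) (n m : nat).
Implicit Types (p q : R) (t v w : 'I_n -> 'I_m -> R).

Lemma Lpq_eq0 p q t v : Lpq p q t v = 0 -> t = v.
Proof.
move=> /powR_eq0_eq0 /eqP; rewrite psumr_eq0 => [/allP rows0|i _]; last exact: powR_ge0.
apply/funext => i; apply/funext => a.
have /eqP/powR_eq0_eq0/eqP := rows0 i (mem_index_enum i).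
rewrite psumr_eq0 => [/allP /(_ a (mem_index_enum a))|b _]; last exact: powR_ge0.
by move=> /eqP/powR_eq0_eq0/normr0_eq0/subr0_eq.
Qed.

Lemma Lpq_xx p q t : 0 < p -> 0 < q -> Lpq p q t t = 0.
Proof.
move=> p_gt0 q_gt0; rewrite /Lpq big1 ?powR0 // ?div1r ?invr_eq0 ?gt_eqF // => i _.
rewrite big1 ?powR0 // ?mulf_neq0 ?invr_eq0 ?gt_eqF // => a _.
by rewrite subrr normr0 powR0 // gt_eqF.
Qed.

Lemma ltr_Lpq p q t v w k b : 0 < p -> 0 < q ->
    (forall i a, `|t i a - v i a| <= `|t i a - w i a|) ->
    `|t k b - v k b| < `|t k b - w k b| ->
  Lpq p q t v < Lpq p q t w.
Proof.
move=> p_gt0 q_gt0 vw vw_kb.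
have row_le i : \sum_a `|t i a - v i a| `^ p <= \sum_a `|t i a - w i a| `^ p.
  by apply: ler_sum_powR => [|a]; [exact: ltW | rewrite normr_ge0 vw].
rewrite gt0_ltr_powR ?nnegrE ?sum_powR_ge0 ?div1r ?invr_gt0 //.
apply: (ltr_sum_powR (k := k)) => [|i|]; first by rewrite divr_gt0.
- by rewrite sum_powR_ge0 row_le.
- by apply: ltr_sum_powR vw_kb => // a; rewrite normr_ge0 vw.
Qed.

Lemma Lpp_bcast p t (f : 'I_m -> R) : 0 < p ->
  Lpq p p t (bcast f) = (\sum_a ploss p (fun i => t i a) (f a)) `^ (1 / p).
Proof.
move=> p_gt0; rewrite /Lpq divff ?gt_eqF // exchange_big /=; congr (_ `^ _).
by apply: eq_bigr => i _; rewrite powRr1 // sum_powR_ge0.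
Qed.

Lemma ler_Lpp_bcast p t (f f' : 'I_m -> R) : 0 < p ->
  (Lpq p p t (bcast f) <= Lpq p p t (bcast f')) =
  (\sum_a ploss p (fun i => t i a) (f a) <= \sum_a ploss p (fun i => t i a) (f' a)).
Proof.
move=> p_gt0; rewrite !Lpp_bcast //.
apply: (le_mono_in (gt0_ltr_powR _)); rewrite ?nnegrE ?divr_gt0 ?sumr_ge0 //.
all: by move=> a _; exact: sum_powR_ge0.
Qed.

End Loss.

Section Clamp.
Variable R : realType.
Implicit Types lo hi t y : R.

Definition clamp lo hi t := Num.min (Num.max t lo) hi.

Lemma clamp_in lo hi t : lo <= t <= hi -> clamp lo hi t = t.
Proof. by case/andP=> lo_t t_hi; rewrite /clamp max_l // min_l. Qed.

Lemma ltr_dist_clamp lo hi y t : lo <= y <= hi -> ~~ (lo <= t <= hi) ->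
  `|y - clamp lo hi t| < `|y - t|.
Proof.
move=> /andP[lo_y y_hi]; have lo_hi := le_trans lo_y y_hi.
rewrite negb_and -!ltNge /clamp => /orP[t_lo|hi_t].
  rewrite max_r ?ltW // min_l //.
  by rewrite !ger0_norm ?subr_ge0 ?ltrD2l ?ltrN2 // (le_trans (ltW t_lo)).
have y_t : y <= t := le_trans y_hi (ltW hi_t).
rewrite max_l ?(le_trans lo_y) // min_r ?ltW //.
by rewrite !ler0_norm ?subr_le0 // ltrN2 ltrD2l ltrN2.
Qed.

End Clamp.

Section Monotonic.
Variables (R : realType) (d : nat).
Implicit Types (h : ('I_d -> R) -> R).

Lemma monotonic_max h1 h2 :
  monotonic h1 -> monotonic h2 -> monotonic (fun z => Num.max (h1 z) (h2 z)).
Proof.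
move=> [r1 m1] [r2 m2]; split=> [z zb|z z' zb z'b zz'].
  case/andP: (r1 z zb) => lo1 hi1; case/andP: (r2 z zb) => _ hi2.
  by rewrite le_max ge_max lo1 hi1 hi2.
by rewrite ge_max !le_max (m1 _ _ zb z'b zz') (m2 _ _ zb z'b zz') !orbT.
Qed.

Lemma monotonic_min h1 h2 :
  monotonic h1 -> monotonic h2 -> monotonic (fun z => Num.min (h1 z) (h2 z)).
Proof.
move=> [r1 m1] [r2 m2]; split=> [z zb|z z' zb z'b zz'].
  case/andP: (r1 z zb) => lo1 hi1; case/andP: (r2 z zb) => lo2 _.
  by rewrite le_min ge_min lo1 lo2 hi1.
by rewrite le_min !ge_min (m1 _ _ zb z'b zz') (m2 _ _ zb z'b zz') !orbT.
Qed.

Lemma monotonic_clamp lo hi h : monotonic lo -> monotonic hi -> monotonic h ->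
  monotonic (fun z => clamp (lo z) (hi z) (h z)).
Proof. by move=> lo_mono hi_mono h_mono; apply/monotonic_min/hi_mono/monotonic_max. Qed.

Variable J : finType.
Implicit Types (hs : J -> ('I_d -> R) -> R).

Lemma monotonic_bigmax hs : (forall j, monotonic (hs j)) ->
  monotonic (fun z => \big[Num.max/0]_j hs j z).
Proof.
move=> hs_mono; split=> [z zb|z z' zb z'b zz'].
  rewrite bigmax_ge_id /=; apply: bigmax_le => [|j _]; first by rewrite ler0n.
  by case/andP: ((hs_mono j).1 z zb).
by apply: le_bigmax2 => j _; exact: (hs_mono j).2.
Qed.

Lemma monotonic_bigmin hs : (forall j, monotonic (hs j)) ->
  monotonic (fun z => \big[Num.min/10]_j hs j z).
Proof.
move=> hs_mono; split=> [z zb|z z' zb z'b zz'].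
  rewrite bigmin_le_id andbT; apply: le_bigmin => [|j _]; first by rewrite ler0n.
  by case/andP: ((hs_mono j).1 z zb).
by apply: le_bigmin2 => j _; exact: (hs_mono j).2.
Qed.

End Monotonic.

Lemma pbalance_root_consistency (R : realType) (n m : nat) (p : R) (i0 : 'I_n)
    (y : 'I_n -> 'I_m -> R) (s : 'I_m -> R) :
  1 < p -> (forall a, pbalance p (fun i => y i a) (s a) = 0) -> consistency y s.
Proof.
move=> p_gt1 s_root.
have balance_mono := le_nmono (pbalance_decr p_gt1 i0 _).
have balance_smono v := leW_nmono (balance_mono v).
have perm_balance b (pi : {perm 'I_n}) t :
    pbalance p (fun i => y i b) t = pbalance p (fun i => y (pi i) b) t.
  exact/esym/(pbalance_perm p pi (fun i => y i b)).
split=> [a b [pi dom]|a b [pi [dom [k dom_k]]]].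
- rewrite -(balance_mono (fun i => y i b)) s_root -(s_root a) (perm_balance b pi).
  exact: ler_pbalance.
- rewrite -(balance_smono (fun i => y i b)) s_root -(s_root a) (perm_balance b pi).
  exact: ltr_pbalance dom_k.
Qed.

Lemma Agg_output_bcast (R : realType) (n m : nat) (p q : R) (g s : 'I_m -> R) :
  (0 < n)%N -> 0 < p -> 0 < q -> Agg_output p q (@bcast R n m g) s -> s = g.
Proof.
move=> n_gt0 p_gt0 q_gt0 [s_opt _].
have /Lpq_eq0 gs : Lpq p q (@bcast R n m g) (bcast s) = 0.
  by apply/le_anti; rewrite powR_ge0 andbT -(Lpq_xx (@bcast R n m g) p_gt0 q_gt0) s_opt.
by apply/funext => a; exact: esym (congr1 (fun f => f (Ordinal n_gt0) a) gs).
Qed.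

Lemma values_objective (R : realType) (n m d : nat) (x : 'I_n -> 'I_m -> 'I_d -> R)
    (h : ('I_d -> R) -> R) (i0 : 'I_n) :
  objectivity x -> values x h = bcast (fun a => h (x i0 a)).
Proof. by move=> obj; apply/funext => i; apply/funext => a; rewrite /values (obj i i0). Qed.

Section ObjectiveERM.
Variables (R : realType) (n m d : nat).
Hypothesis n_gt0 : (0 < n)%N.
Variables (xo : 'I_m -> 'I_d -> R) (hf : 'I_n -> ('I_d -> R) -> R).
Hypotheses (xo_box : forall a, in_box (xo a)) (hf_mono : forall i, monotonic (hf i)).
Variable y : 'I_n -> 'I_m -> R.
Hypothesis y_hf : forall i a, y i a = hf i (xo a).
Variable hh : ('I_d -> R) -> R.
Hypothesis hh_mono : monotonic hh.

Let i0 := Ordinal n_gt0.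
Let lo z := \big[Num.min/10]_i hf i z.
Let hi z := \big[Num.max/0]_i hf i z.

Let recommendation_between i a : lo (xo a) <= y i a <= hi (xo a).
Proof. by rewrite y_hf bigmin_le le_bigmax. Qed.

Definition erm_optimal p q := forall h, monotonic h ->
  Lpq p q y (bcast (fun a => hh (xo a))) <= Lpq p q y (bcast (fun a => h (xo a))).

Lemma erm_between p q : 0 < p -> 0 < q -> erm_optimal p q ->
  forall a, lo (xo a) <= hh (xo a) <= hi (xo a).
Proof.
move=> p_gt0 q_gt0 opt a; apply/negPn/negP => out.
pose h z := clamp (lo z) (hi z) (hh z).
have h_mono : monotonic h.
  exact: monotonic_clamp (monotonic_bigmin hf_mono) (monotonic_bigmax hf_mono) hh_mono.
have := opt h h_mono; apply/negP; rewrite -ltNge.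
apply: (ltr_Lpq (k := i0) (b := a)) => // [i b|]; last first.
  exact: ltr_dist_clamp (recommendation_between _ _) out.
have [in_b|out_b] := boolP (lo (xo b) <= hh (xo b) <= hi (xo b)).
  by rewrite /bcast /h clamp_in.
by rewrite ltW // ltr_dist_clamp.
Qed.

Lemma erm_consensus p q : 0 < p -> 0 < q -> erm_optimal p q ->
  forall a y0, (forall i, y i a = y0) -> hh (xo a) = y0.
Proof.
move=> p_gt0 q_gt0 opt a y0 y_a; have /andP[lo_g g_hi] := erm_between p_gt0 q_gt0 opt a.
have /andP[y0_ge0 y0_le10] : 0 <= y0 <= 10.
  by rewrite -(y_a i0) y_hf; exact: (hf_mono i0).1.
apply/le_anti/andP; split.
- by apply: le_trans g_hi _; apply: bigmax_le => // i _; rewrite -y_hf y_a.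
- by apply: le_trans lo_g; apply: le_bigmin => // i _; rewrite -y_hf y_a.
Qed.

Lemma exists_monotonic_pbalance_root p : 1 < p ->
  exists c, monotonic c /\ forall z, in_box z -> pbalance p (fun i => hf i z) (c z) = 0.
Proof.
move=> p_gt1.
have root z : exists c, in_box z -> 0 <= c <= 10 /\ pbalance p (fun i => hf i z) c = 0.
  have [zb|zNb] := pselect (in_box z); last by exists 0.
  have [c c_in c_root] := exists_pbalance_root p_gt1 i0 (fun i => (hf_mono i).1 z zb).
  by exists c.
have [c c_spec] := choice root.
exists c; split=> [|z zb]; last by case: (c_spec z zb).
split=> [z zb|z z' zb z'b zz']; first by case: (c_spec z zb).
rewrite leNgt; apply/negP => c_lt.
have hf_le : pbalance p (fun i => hf i z) (c z') <= pbalance p (fun i => hf i z') (c z').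
  by apply: (ler_pbalance p_gt1) => i; exact: (hf_mono i).2.
have := lt_le_trans (pbalance_decr p_gt1 i0 _ c_lt) hf_le.
by rewrite (c_spec z zb).2 (c_spec z' z'b).2 ltxx.
Qed.

Lemma erm_pbalance_root p : 1 < p -> erm_optimal p p ->
  forall a, pbalance p (fun i => y i a) (hh (xo a)) = 0.
Proof.
move=> p_gt1 opt a; have p_gt0 := lt_trans ltr01 p_gt1.
have [c [c_mono c_root]] := exists_monotonic_pbalance_root p_gt1.
have col_root b : pbalance p (fun i => y i b) (c (xo b)) = 0.
  by rewrite -(c_root _ (xo_box b)); congr pbalance; apply/funext => i; exact: y_hf.
have col_min b : ploss p (fun i => y i b) (c (xo b)) <= ploss p (fun i => y i b) (hh (xo b)).
  exact: (ploss_min p_gt1 (hh (xo b)) (col_root b)).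
have sum_le : \sum_b ploss p (fun i => y i b) (hh (xo b)) <=
              \sum_b ploss p (fun i => y i b) (c (xo b)).
  by have := opt c c_mono; rewrite ler_Lpp_bcast.
have col_eq := ler_sum_eq col_min sum_le a.
have -> : hh (xo a) = c (xo a).
  by apply: (ploss_min_unique p_gt1 i0 (col_root a)); rewrite col_eq.
exact: col_root.
Qed.

End ObjectiveERM.

Theorem theorem3p1 (R : realType) (n m d : nat) (p q : R)
    (x : 'I_n -> 'I_m -> 'I_d -> R) (y : 'I_n -> 'I_m -> R)
    (yhat : 'I_n -> 'I_m -> R) (s : 'I_m -> R) :
  (0 < n)%N -> (0 < d)%N -> 1 < p -> 1 < q ->
  admissible x y -> objectivity x ->
  ERM_output p q x y yhat -> Agg_output p q yhat s ->
  consensus y s /\ (p = q -> consistency y s).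
Proof.
move=> n_gt0 _ p_gt1 q_gt1 [x_box [hf [hf_mono y_hf]]] obj [[hh [hh_mono ->]] [opt _]] agg.
have [p_gt0 q_gt0] := (lt_trans ltr01 p_gt1, lt_trans ltr01 q_gt1).
set i0 := Ordinal n_gt0; set xo := fun a => x i0 a.
have xo_box a : in_box (xo a) := x_box i0 a.
have values_xo h : values x h = bcast (fun a => h (xo a)) := values_objective h i0 obj.
have {}y_hf i a : y i a = hf i (xo a) by rewrite y_hf (obj i i0).
have {}opt : erm_optimal xo y hh p q by move=> h /opt; rewrite !values_xo.
rewrite values_xo in agg; have -> := Agg_output_bcast n_gt0 p_gt0 q_gt0 agg.
split=> [a y0|pq].
  exact: (erm_consensus n_gt0 xo_box hf_mono y_hf hh_mono p_gt0 q_gt0 opt).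
subst q; apply: (pbalance_root_consistency i0 p_gt1) => a.
exact: (erm_pbalance_root n_gt0 xo_box hf_mono y_hf p_gt1 opt).
Qed.
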